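(* For a regular language $L\subseteq\Sigma^*$, the following three conditions are equivalent: (A) the syntactic monoid $M$ of $L$ satisfies $yx^{\omega+1}=x^{\omega+1}y$ for all $x,y\in M$, and for all words $x,y,z\in\Sigma^*$ and every non-neutral letter $a$, if $y\in L$ then $xyza^\omega\in L$; (B) there is $p\in\mathbb{N}$ such that for every word $u\in\Sigma^*$, letting $T$ be the set of non-neutral letters $a$ with $|u|_a\ge p$, either $T=\emptyset$ or ($u_{-T}\in \mathrm{Cond}(T)$ iff $u\in L$); (C) there is $p\in\mathbb{N}$ such that for all words $u,v\in\Sigma^*$, letting $T$ be the set of non-neutral letters $a$ with $|u|_a\ge p$, if $v\in L$, $T\neq\emptyset$ and $v_{-T}$ is a factor of $u_{-T}$, then $u\in L$.
   Context: $\Sigma$ is a finite alphabet. A letter $e$ is neutral for $L$ if for all $s,t\in\Sigma^*$, $st\in L$ iff $set\in L$; ''non-neutral'' means not neutral for $L$. $|u|_a$ is the number of occurrences of $a$ in $u$. $u$ is a factor of $v$ if $v=sut$ for some words $s,t$. For $S\subseteq\Sigma$, $u_{-S}$ is the word obtained from $u$ by deleting all letters of $S$. For a non-empty set $S$ of non-neutral letters, $\mathrm{Cond}(S)$ is the set of words $u\in\Sigma^*$ for which there is $v\in L$ such that $v_{-S}$ is a factor of $u_{-S}$. The syntactic monoid $M$ of $L$ is $\Sigma^*$ quotiented by the congruence $u\sim_L v$ iff ($sut\in L\Leftrightarrow svt\in L$ for all $s,t\in\Sigma^*$); $\omega$ is its idempotent power ($x^\omega x^\omega=x^\omega$ for all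 $x\in M$), and $a^\omega$ denotes the letter $a$ repeated $\omega$ times. *)

From mathcomp Require Import all_boot.
Set Implicit Arguments. Unset Strict Implicit. Unset Printing Implicit Defensive.

Definition language (Sigma : finType) := seq Sigma -> Prop.

Definition regular (Sigma : finType) (L : language Sigma) : Prop :=
  exists (Q : finType) (q0 : Q) (delta : Q -> Sigma -> Q) (F : pred Q),
    forall w, L w <-> F (foldl delta q0 w).

Definition synt (Sigma : finType) (L : language Sigma) (u v : seq Sigma) : Prop :=
  forall s t, L (s ++ u ++ t) <-> L (s ++ v ++ t).

Definition wpow (Sigma : finType) (x : seq Sigma) (n : nat) : seq Sigma :=
  flatten (nseq n x).

Definition neutral (Sigma : finType) (L : language Sigma) (e : Sigma) : Prop :=
  forall s t, L (s ++ t) <-> L (s ++ e :: t).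

Definition del (Sigma : finType) (S : {set Sigma}) (u : seq Sigma) : seq Sigma :=
  [seq c <- u | c \notin S].

Definition Cond (Sigma : finType) (L : language Sigma) (S : {set Sigma})
    (u : seq Sigma) : Prop :=
  exists v, L v /\ infix (del S v) (del S u).

From mathcomp Require Import all_boot zify.
From Stdlib Require Import Setoid Morphisms ClassicalEpsilon.
Set Implicit Arguments. Unset Strict Implicit. Unset Printing Implicit Defensive.

(* (A) => (C).  Let n = omega and let every letter of T occur more than |Q^Q| times
   in u.  Pumping an occurrence of a letter b of T gives u ~ u b^n, hence u ~ e u with
   e = prod_(b in T) b^n.  The word e is central, idempotent and absorbs each b^n, so
   modulo e every letter of T commutes with all words and has inverse b^(n-1).  If
   u_{-T} = x v_{-T} z, then u ~ e x v z K, where K cancels the T-letters of v and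
   restores those of u, and e x v z K is in L by the last clause of (A).
   (B) => (A).  Take omega a multiple of |Q^Q|! larger than p.  Once neutral letters
   are erased, x^(omega+1) consists of heavy letters only, so moving it around does
   not change u_{-T}; and y_{-T} is a factor of (x y z a^omega)_{-T}.
   (B) <=> (C) is a rewording: a word of L witnesses its own membership in Cond(T). *)

Section WordPowers.
Variable S : finType.
Implicit Types x y : seq S.

Lemma wpowS x k : wpow x k.+1 = x ++ wpow x k.
Proof. by []. Qed.

Lemma wpowD x i j : wpow x (i + j) = wpow x i ++ wpow x j.
Proof. by rewrite /wpow nseqD flatten_cat. Qed.

Lemma wpowM x i j : wpow (wpow x i) j = wpow x (i * j).
Proof. by elim: j => [|j IHj]; rewrite ?muln0 // wpowS IHj mulnS wpowD. Qed.

Lemma wpow_nil k : wpow ([::] : seq S) k = [::].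
Proof. by elim: k. Qed.

Lemma wpow_seq1 (a : S) k : wpow [:: a] k = nseq k a.
Proof. by elim: k => // k IHk; rewrite wpowS IHk. Qed.

Lemma wpow_cat_rot x y k : 0 < k -> wpow (x ++ y) k = x ++ wpow (y ++ x) k.-1 ++ y.
Proof.
case: k => // k _; elim: k => [|k IHk]; first by rewrite /wpow /= !cats0.
by rewrite wpowS IHk // wpowS -!catA.
Qed.

Lemma filter_wpow (P : pred S) x k : filter P (wpow x k) = wpow (filter P x) k.
Proof. by rewrite /wpow filter_flatten map_nseq. Qed.

Lemma count_wpow (P : pred S) x k : count P (wpow x k) = k * count P x.
Proof. by elim: k => // k IHk; rewrite wpowS count_cat IHk mulSn. Qed.

End WordPowers.

Section SyntacticCongruence.
Variables (S : finType) (L : language S).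
Implicit Types c u v w x y : seq S.

Lemma synt_refl u : synt L u u.
Proof. by []. Qed.

Lemma synt_sym u v : synt L u v -> synt L v u.
Proof. by move=> uv s t; split=> /uv. Qed.

Lemma synt_trans u v w : synt L u v -> synt L v w -> synt L u w.
Proof. by move=> uv vw s t; split=> [/uv/vw|/vw/uv]. Qed.

#[export] Instance synt_equivalence : Equivalence (synt L).
Proof. split; [exact: synt_refl | exact: synt_sym | exact: synt_trans]. Qed.

Lemma synt_catl w u v : synt L u v -> synt L (w ++ u) (w ++ v).
Proof. by move=> uv s t; have := uv (s ++ w) t; rewrite -!catA. Qed.

Lemma synt_catr w u v : synt L u v -> synt L (u ++ w) (v ++ w).
Proof. by move=> uv s t; have := uv s (w ++ t); rewrite -!catA. Qed.

#[export] Instance cat_synt_proper : Proper (synt L ==> synt L ==> synt L) (@cat S).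
Proof. by move=> u u' uu' v v' vv'; apply: synt_trans (synt_catr _ uu') (synt_catl _ vv'). Qed.

Lemma synt_lang u v : synt L u v -> L u -> L v.
Proof. by move=> uv; have := uv [::] [::]; rewrite /= !cats0 => ->. Qed.

Lemma synt_pump u f k : synt L u (u ++ f) -> synt L u (u ++ wpow f k).
Proof.
move=> uf; elim: k => [|k IHk]; first by rewrite cats0.
by rewrite wpowS catA -uf.
Qed.

Definition central c := forall y, synt L (y ++ c) (c ++ y).

Lemma central_synt c c' : synt L c c' -> central c -> central c'.
Proof. by move=> cc' Cc y; rewrite -cc'. Qed.

Lemma central_nil : central [::].
Proof. by move=> y; rewrite cats0. Qed.

Lemma central_cat c c' : central c -> central c' -> central (c ++ c').
Proof. by move=> Cc Cc' y; rewrite catA Cc -catA Cc' catA. Qed.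

Lemma central_wpow c k : central c -> central (wpow c k).
Proof. by move=> Cc; elim: k => [|k]; [exact: central_nil | exact: central_cat]. Qed.

End SyntacticCongruence.

Definition powers (S : finType) (k : nat) (s : seq S) : seq S :=
  flatten [seq nseq k b | b <- s].

Lemma powers_cons (S : finType) k (s : seq S) b : powers k (b :: s) = nseq k b ++ powers k s.
Proof. by []. Qed.

Lemma powers_rcons (S : finType) k (s : seq S) b :
  powers k (rcons s b) = powers k s ++ nseq k b.
Proof. by rewrite /powers map_rcons flatten_rcons. Qed.

Lemma all_powers (S : finType) (P : pred S) k s : all P s -> all P (powers k s).
Proof.
elim: s => // b s IHs /andP [Pb Ps].
by rewrite powers_cons all_cat all_nseq Pb orbT IHs.
Qed.

Lemma filter_eq_nil (T : Type) (P : pred T) s : all (fun x => ~~ P x) s -> filter P s = [::].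
Proof. by elim: s => //= x s IHs /andP [/negbTE -> /IHs]. Qed.

Lemma prefix_pigeonhole (S A : finType) (g : seq S -> A) (b : S) (u : seq S) :
  #|A| < count_mem b u ->
  exists s f t, [/\ u = s ++ f ++ t, b \in f & g s = g (s ++ f)].
Proof.
pose pumpable u := exists s f t, [/\ u = s ++ f ++ t, b \in f & g s = g (s ++ f)].
pose prefixes u (ps : seq (seq S)) :=
  [/\ uniq (map g ps), {in ps, forall p, exists2 f, u = p ++ f & b \in f}
    & size ps = count_mem b u].
suff [// | [ps [g_ps ps_u size_ps]]] : pumpable u \/ exists ps, prefixes u ps.
  by rewrite -size_ps -(size_map g) -(card_uniqP g_ps) ltnNge max_card.
elim/last_ind: u => [|u c [[s [f [t [-> fb gsf]]]] | [ps [g_ps ps_u size_ps]]]].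
- by right; exists [::].
- by left; exists s, f, (rcons t c); rewrite -!rcons_cat.
have count_rcons d : count_mem b (rcons u d) = count_mem b u + (d == b).
  by rewrite -cats1 count_cat /= addn0.
case: (eqVneq c b) => [-> | cb]; last first.
  right; exists ps; split=> //; last by rewrite count_rcons (negbTE cb) addn0.
  move=> p /ps_u [f -> fb]; exists (rcons f c); first by rewrite rcons_cat.
  by rewrite mem_rcons inE fb orbT.
case/boolP: (g u \in map g ps) => [/mapP [p /ps_u [f -> fb] gu] | gu].
  by left; exists p, f, [:: b]; rewrite -gu cats1 rcons_cat.
right; exists (rcons ps u); split.
- by rewrite map_rcons rcons_uniq gu.
- move=> p; rewrite mem_rcons inE => /predU1P [-> | /ps_u [f -> fb]].
    by exists [:: b]; rewrite ?cats1 ?mem_head.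
  by exists (rcons f b); rewrite ?rcons_cat // mem_rcons mem_head.
- by rewrite size_rcons count_rcons eqxx addn1 size_ps.
Qed.

Lemma periodic_fact_double (A : finType) (phi : nat -> A) :
  (forall i j k, phi i = phi j -> phi (i + k) = phi (j + k)) ->
  forall N, #|A|`! %| N -> #|A| <= N -> phi N = phi (N + N).
Proof.
move=> phi_shift N fact_N A_N.
have [i [j [lt_ij phi_ij]]] : exists i j : 'I_#|A|.+1, i < j /\ phi i = phi j.
  have : ~~ injectiveb (phi \o val : 'I_#|A|.+1 -> A).
    by apply/injectiveP => /leq_card; rewrite card_ord ltnn.
  case/injectivePn=> i [j ij phi_ij].
  case: (ltngtP i j) => [lt_ij | lt_ji | /val_inj eq_ij]; first by exists i, j.
    by exists j, i.
  by rewrite eq_ij eqxx in ij.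
set d := j - i.
have phi_period c : phi (i + c * d) = phi i.
  elim: c => [|c IHc]; first by rewrite addn0.
  by rewrite mulSnr addnA (phi_shift _ _ _ IHc) subnKC // ltnW.
have d_N : d %| N.
  apply: dvdn_trans fact_N; apply: dvdn_fact.
  by have := ltn_ord j; rewrite /d; lia.
have i_N : i <= N by have := ltn_ord i; lia.
rewrite -{1}(subnKC i_N) (_ : N + N = i + N %/ d * d + (N - i)); last first.
  by rewrite divnK //; lia.
by rewrite (phi_shift _ _ (N - i) (phi_period (N %/ d))).
Qed.

Section TransitionMonoid.
Variables (S Q : finType) (delta : Q -> S -> Q).
Implicit Types u v w : seq S.

Definition act u : {ffun Q -> Q} := [ffun q => foldl delta q u].

Lemma act_cat u v q : act (u ++ v) q = act v (act u q).
Proof. by rewrite !ffunE foldl_cat. Qed.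

Lemma act_catr w u v : act u = act v -> act (u ++ w) = act (v ++ w).
Proof. by move=> uv; apply/ffunP=> q; rewrite !act_cat uv. Qed.

Lemma act_synt (L : language S) q0 (F : pred Q) :
  (forall w, L w <-> F (foldl delta q0 w)) -> forall u v, act u = act v -> synt L u v.
Proof.
move=> L_dfa u v uv s t; rewrite !L_dfa !foldl_cat.
by have := congr1 (fun f : {ffun Q -> Q} => f (foldl delta q0 s)) uv; rewrite !ffunE => ->.
Qed.

Lemma act_wpow_idem x N :
  #|{ffun Q -> Q}|`! %| N -> #|{ffun Q -> Q}| <= N -> act (wpow x N) = act (wpow x (N + N)).
Proof.
apply: (periodic_fact_double (phi := fun k => act (wpow x k))) => i j k ij.
by rewrite !wpowD; apply: act_catr.
Qed.

End TransitionMonoid.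

Lemma synt_cat_powers (S : finType) (L : language S) k s u :
  (forall b, b \in s -> synt L u (u ++ nseq k b)) -> synt L u (u ++ powers k s).
Proof.
elim: s => [|b s IHs] ub; first by rewrite cats0.
rewrite powers_cons catA -ub ?mem_head //; apply: IHs => c cs.
by apply: ub; rewrite inE cs orbT.
Qed.

Lemma lang_cat_powers (S : finType) (L : language S) k :
  (forall x y z a, ~ neutral L a -> L y -> L (x ++ y ++ z ++ nseq k a)) ->
  forall s, s != [::] -> (forall b, b \in s -> ~ neutral L b) ->
  forall x y z, L y -> L (x ++ y ++ z ++ powers k s).
Proof.
move=> clause3; case/lastP=> // s b _ sN x y z Ly.
have := clause3 x y (z ++ powers k s) b (sN b _) Ly.
by rewrite powers_rcons -!catA mem_rcons mem_head; apply.
Qed.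

Section Conditions.
Variables (S : finType) (L : language S).
Implicit Types (p : nat) (u v w : seq S) (T : {set S}).

Definition nonneutral a : bool :=
  if excluded_middle_informative (neutral L a) then false else true.

Lemma nonneutralP a : reflect (~ neutral L a) (nonneutral a).
Proof. by rewrite /nonneutral; case: excluded_middle_informative => a_neutral; constructor. Qed.

Lemma lang_filter_nonneutral w : L w <-> L (filter nonneutral w).
Proof.
suff catl_filter s : L (s ++ w) <-> L (s ++ filter nonneutral w) by apply: (catl_filter [::]).
elim: w s => //= c w IHw s; rewrite /nonneutral.
case: excluded_middle_informative => [c_neutral | _] /=; first by rewrite -c_neutral.
by have := IHw (rcons s c); rewrite -!cats1 -!catA.
Qed.

Definition heavy_spec p u T := forall a, a \in T <-> (~ neutral L a /\ p <= count_mem a u).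

Definition heavy p u : {set S} := [set a | nonneutral a & p <= count_mem a u].

Lemma heavyP p u : heavy_spec p u (heavy p u).
Proof. by move=> a; rewrite inE; split=> [/andP [/nonneutralP] | [/nonneutralP -> ->]]. Qed.

Lemma heavy_perm p u v : perm_eq u v -> heavy p u = heavy p v.
Proof. by move=> /permP uv; apply/setP=> a; rewrite !inE uv. Qed.

Definition condB_at p :=
  forall u T, heavy_spec p u T -> T = set0 \/ (Cond L T (del T u) <-> L u).

Definition condC_at p :=
  forall u v T, heavy_spec p u T -> L v -> T != set0 -> infix (del T v) (del T u) -> L u.

Lemma del_id T u : del T (del T u) = del T u.
Proof. exact: filter_id. Qed.

Lemma del_cat T u v : del T (u ++ v) = del T u ++ del T v.
Proof. exact: filter_cat. Qed.

Lemma condB_condC p : condB_at p <-> condC_at p.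
Proof.
rewrite /condB_at /condC_at /Cond; split=> [HB u v T uT Lv T0 vu | HC u T uT].
  case: (HB u T uT) => [T0' | <-]; first by rewrite T0' eqxx in T0.
  by exists v; rewrite del_id.
case: (eqVneq T set0) => [-> | T0]; [by left | right; rewrite del_id].
split=> [[v [Lv vu]] | Lu]; first exact: HC vu.
by exists u; split=> //; apply: infix_refl.
Qed.

Lemma condB_central p n : condB_at p -> p <= n -> forall x, central L (wpow x n.+1).
Proof.
move=> HB p_n x y s t.
rewrite lang_filter_nonneutral [X in _ <-> X]lang_filter_nonneutral !filter_cat filter_wpow.
move: (filter nonneutral s) (filter nonneutral y) (filter nonneutral t) => s' y' t'.
have x'N := filter_all nonneutral x.
move: (filter nonneutral x) x'N => [_ | a x'' x'N]; first by rewrite wpow_nil /= cats0.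
set x' := a :: x''; have ax : a \in x' := mem_head a x''.
set X := wpow x' n.+1; set w1 := s' ++ (y' ++ X) ++ t'; set w2 := s' ++ (X ++ y') ++ t'.
have w12 : perm_eq w1 w2 by rewrite perm_cat2l perm_cat2r perm_catC.
set T := heavy p w1.
have x'T : {subset x' <= T}.
  move=> c cx; rewrite inE (allP x'N c cx) /=.
  have : 0 < count_mem c x' by rewrite -has_count has_pred1.
  rewrite /w1 /X !count_cat count_wpow; move: (count_mem c x') => k; nia.
have del_X : del T X = [::].
  by rewrite /X /del filter_wpow filter_eq_nil ?wpow_nil //; apply/allP=> b /x'T ->.
have T0 : T != set0 by apply/set0Pn; exists a; apply: x'T.
have w2T : heavy_spec p w2 T by rewrite /T (heavy_perm p w12); apply: heavyP.
case: (HB w1 T (heavyP p w1)) => [/eqP | <-]; first by rewrite (negbTE T0).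
case: (HB w2 T w2T) => [/eqP | <-]; first by rewrite (negbTE T0).
by clearbody X; rewrite /w1 /w2 !del_cat del_X /= cats0.
Qed.

Lemma condB_clause3 p n : condB_at p -> p <= n ->
  forall x y z a, ~ neutral L a -> L y -> L (x ++ y ++ z ++ nseq n a).
Proof.
move=> HB p_n x y z a aN Ly; set u := x ++ y ++ z ++ nseq n a.
have aT : a \in heavy p u.
  rewrite inE; apply/andP; split; first exact/nonneutralP.
  by rewrite /u !count_cat count_nseq /= eqxx mul1n; lia.
case: (HB u _ (heavyP p u)) => [T0 | <-]; first by rewrite T0 in_set0 in aT.
by exists y; split=> //; rewrite del_id /u !del_cat infix_infix.
Qed.

End Conditions.

Section OmegaPower.
Variables (S : finType) (L : language S) (n : nat).
Hypothesis n_gt0 : 0 < n.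
Hypothesis wpow_idem : forall x : seq S, synt L (wpow x n) (wpow x (n + n)).
Hypothesis wpowS_central : forall x : seq S, central L (wpow x n.+1).
Implicit Types (a b : S) (s u w x y : seq S).

Lemma wpow_idem_mul x k : synt L (wpow x (k.+1 * n)) (wpow x n).
Proof. by elim: k => [|k IHk]; rewrite ?mul1n // mulSn wpowD IHk -wpowD -wpow_idem. Qed.

Lemma wpow_idem_cat x : synt L (wpow x n ++ wpow x n) (wpow x n).
Proof. by rewrite -wpowD -wpow_idem. Qed.

Lemma wpow_central x : central L (wpow x n).
Proof.
apply: (@central_synt _ _ (wpow (wpow x n.+1) n)); last exact: central_wpow.
by rewrite wpowM wpow_idem_mul.
Qed.

(* [(xy)^n ~ (xy)^2n = x (yx)^(2n-1) y ~ (yx)^n (xy)^n], and symmetrically. *)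
Lemma wpow_conj_cat x y : synt L (wpow (x ++ y) n) (wpow (y ++ x) n ++ wpow (x ++ y) n).
Proof.
have two_n : (n + n).-1 = n + n.-1 by rewrite -!subn1 addnBA.
rewrite {1}wpow_idem wpow_cat_rot ?addn_gt0 ?n_gt0 // two_n wpowD -!catA catA.
by rewrite (wpow_central (y ++ x) x) -catA -wpow_cat_rot.
Qed.

Lemma wpow_conj x y : synt L (wpow (x ++ y) n) (wpow (y ++ x) n).
Proof. by rewrite wpow_conj_cat wpow_central -wpow_conj_cat. Qed.

Lemma nseq_central a : central L (nseq n a).
Proof. by rewrite -wpow_seq1; apply: wpow_central. Qed.

Lemma nseqS_central a : central L (nseq n.+1 a).
Proof. by rewrite -wpow_seq1; apply: wpowS_central. Qed.

Lemma nseq_idem_cat a : synt L (nseq n a ++ nseq n a) (nseq n a).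
Proof. by rewrite -wpow_seq1 wpow_idem_cat. Qed.

(* Rotating [w] to [a r], the idempotent [e = (a r)^n] is [a y] with [y = r (a r)^(n-1)],
   so [a] is right invertible modulo [e]. *)
Lemma wpow_absorb w a : a \in w -> synt L (wpow w n ++ nseq n a) (wpow w n).
Proof.
case/splitPr=> al be; rewrite wpow_conj /=.
set r := be ++ al; set e := wpow (a :: r) n; set y := r ++ wpow (a :: r) n.-1.
have e_ay : e = a :: y by rewrite /e -(prednK n_gt0).
clearbody y.
have e_central : central L e := wpow_central _.
have e_idem : synt L (e ++ e) e := wpow_idem_cat _.
have e_inv k : synt L (e ++ nseq k a ++ wpow y k) e.
  elim: k => [|k IHk]; first by rewrite cats0.
  have a_k1 : nseq k.+1 a = nseq k a ++ [:: a] by rewrite -addn1 nseqD.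
  rewrite a_k1 wpowS -!catA cat1s -cat_cons -e_ay.
  by rewrite (catA (nseq k a)) (e_central (nseq k a)) !catA e_idem -!catA.
symmetry; transitivity (e ++ (nseq n a ++ nseq n a) ++ wpow y n).
  by rewrite nseq_idem_cat e_inv.
by rewrite -catA catA -(e_central (nseq n a)) -catA e_inv.
Qed.

Lemma powers_central s : central L (powers n s).
Proof.
by elim: s => [|b s IHs]; [exact: central_nil | exact: central_cat (nseq_central b) IHs].
Qed.

Lemma powers_absorb s b : b \in s -> synt L (powers n s ++ nseq n b) (powers n s).
Proof.
elim: s => // c s IHs; rewrite inE powers_cons -catA => /predU1P[-> | /IHs bs].
  by rewrite (nseq_central c) catA nseq_idem_cat.
by rewrite bs.
Qed.

Lemma powers_swap s b y : b \in s ->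
  synt L (powers n s ++ b :: y) (powers n s ++ y ++ [:: b]).
Proof.
move=> bs; have b_n1 : nseq n.+1 b = nseq n b ++ [:: b] by rewrite -addn1 nseqD.
transitivity (powers n s ++ nseq n.+1 b ++ y).
  by rewrite b_n1 -catA catA powers_absorb.
rewrite -(nseqS_central b y) b_n1 (catA y) (nseq_central b y) -catA catA.
by rewrite powers_absorb.
Qed.

Lemma powers_del_keep (T : {set S}) s w : {subset T <= s} ->
  synt L (powers n s ++ w) (powers n s ++ del T w ++ [seq c <- w | c \in T]).
Proof.
move=> Ts; elim: w => [|c w IHw]; first by [].
rewrite -cat1s catA -(powers_central s [:: c]) -catA IHw catA.
rewrite (powers_central s [:: c]) -catA cat1s /del /=.
case cT: (c \in T) => //=.
by rewrite -cat_cons catA (powers_swap _ (Ts c cT)) -!catA.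
Qed.

Lemma powers_cancel s w : all (mem s) w ->
  synt L (powers n s ++ w ++ powers n.-1 (rev w)) (powers n s).
Proof.
elim: w => [|b w IHw]; first by rewrite /= cats0.
case/andP=> bs ws; rewrite rev_cons powers_rcons.
transitivity (([:: b] ++ powers n s) ++ (w ++ powers n.-1 (rev w)) ++ nseq n.-1 b).
  by rewrite (powers_central s [:: b]) -!catA.
rewrite -catA (catA (powers n s)) IHw // catA (powers_central s [:: b]) -catA.
by rewrite -[_ ++ nseq _ _]/(nseq n.-1.+1 b) (prednK n_gt0) powers_absorb.
Qed.

Section Automaton.
Variables (Q : finType) (q0 : Q) (delta : Q -> S -> Q) (F : pred Q).
Hypothesis L_dfa : forall w, L w <-> F (foldl delta q0 w).

Lemma synt_cat_nseq u b : #|{ffun Q -> Q}| < count_mem b u -> synt L u (u ++ nseq n b).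
Proof.
case/(prefix_pigeonhole (act delta)) => s [f [t [-> fb sf]]].
have s_f : synt L s (s ++ wpow f n) := synt_pump n (act_synt L_dfa sf).
have u_f : synt L (s ++ f ++ t) ((s ++ f ++ t) ++ wpow f n).
  transitivity ((s ++ wpow f n) ++ f ++ t); first exact: synt_catr s_f.
  by rewrite -catA -(wpow_central f (f ++ t)) !catA.
move: (s ++ f ++ t) u_f => w w_f; apply: (synt_trans w_f).
by rewrite -(wpow_absorb fb) catA -w_f.
Qed.

Lemma omega_condC :
  (forall x y z a, ~ neutral L a -> L y -> L (x ++ y ++ z ++ nseq n a)) ->
  condC_at L #|{ffun Q -> Q}|.+1.
Proof.
move=> clause3 u v T uT Lv T0 /infixP [al [be del_u]].
have T_enum : {subset T <= enum T} by move=> b; rewrite mem_enum.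
have enum_T b : b \in enum T -> ~ neutral L b /\ #|{ffun Q -> Q}| < count_mem b u.
  by rewrite mem_enum => /uT.
set e := powers n (enum T); pose keep w := [seq c <- w | c \in T].
have u_e : synt L u (e ++ del T u ++ keep u).
  rewrite -powers_del_keep // -(powers_central _ u).
  by apply: synt_cat_powers => b /enum_T [_ /synt_cat_nseq].
set K := powers n.-1 (rev (keep v)) ++ keep u.
have K_T : all (mem T) K.
  by rewrite all_cat filter_all andbT all_powers // all_rev filter_all.
have K_cancel : synt L (e ++ keep v ++ K) (e ++ keep u).
  rewrite /K (catA (keep v)) (catA e) powers_cancel //.
  by apply/allP=> c; rewrite mem_filter => /andP [/T_enum].
clearbody K.
have [al_T be_T] : all (fun c => c \notin T) al /\ all (fun c => c \notin T) be.
  by have := filter_all (fun c => c \notin T) u; rewrite -/(del T u) del_u !all_cat => /and3P [].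
have Lw : L (e ++ al ++ v ++ be ++ K).
  have enumT0 : enum T != [::] by move: T0; rewrite -card_gt0 cardE; case: (enum T).
  have Lw := lang_cat_powers clause3 enumT0 (fun b bT => (enum_T b bT).1) al (be ++ K) Lv.
  by apply: synt_lang (powers_central _ _) _; move: Lw; rewrite -!catA.
have del_K : del T K = [::].
  by apply: filter_eq_nil; apply: sub_all K_T => c; rewrite negbK.
have del_w : del T (al ++ v ++ be ++ K) = del T u.
  by rewrite del_u !del_cat del_K /del (all_filterP al_T) (all_filterP be_T) cats0.
have keep_w : [seq c <- al ++ v ++ be ++ K | c \in T] = keep v ++ K.
  by rewrite !filter_cat (filter_eq_nil al_T) (filter_eq_nil be_T) (all_filterP K_T).
apply: synt_lang Lw; apply: synt_trans _ (synt_sym u_e).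
rewrite (powers_del_keep _ T_enum) del_w keep_w catA -(powers_central _ (del T u)) -catA K_cancel.
by rewrite catA (powers_central _ (del T u)) -catA.
Qed.

End Automaton.

End OmegaPower.

Theorem proposition5p5 (Sigma : finType) (L : language Sigma) :
  regular L ->
  let condA :=
    exists n : nat, 0 < n /\
      (* n is the idempotent exponent omega of the syntactic monoid *)
      (forall x : seq Sigma, synt L (wpow x n) (wpow x (n + n))) /\
      (forall x y : seq Sigma,
          synt L (y ++ wpow x n.+1) (wpow x n.+1 ++ y)) /\
      (forall (x y z : seq Sigma) (a : Sigma),
          ~ neutral L a -> L y -> L (x ++ y ++ z ++ nseq n a)) in
  let condB :=
    exists p : nat, forall (u : seq Sigma) (T : {set Sigma}),
      (forall a, a \in T <-> (~ neutral L a /\ p <= count_mem a u)) ->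
      T = set0 \/ (Cond L T (del T u) <-> L u) in
  let condC :=
    exists p : nat, forall (u v : seq Sigma) (T : {set Sigma}),
      (forall a, a \in T <-> (~ neutral L a /\ p <= count_mem a u)) ->
      L v -> T != set0 -> infix (del T v) (del T u) -> L u in
  (condA <-> condB) /\ (condB <-> condC).
Proof.
case=> Q [q0 [delta [F L_dfa]]] condA condB condC.
have B_C : condB <-> condC by split=> -[p /condB_condC]; exists p.
split=> //; split=> [[n [n_gt0 [idem [pow_central clause3]]]] | [p HB]].
  apply/B_C; exists #|{ffun Q -> Q}|.+1.
  exact: (omega_condC n_gt0 idem pow_central L_dfa clause3).
pose N := #|{ffun Q -> Q}|`! * p.+1.
have N_gt0 : 0 < N by rewrite muln_gt0 fact_gt0.
have p_N : p <= N by apply/ltnW/leq_pmull/fact_gt0.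
have fact_N : #|{ffun Q -> Q}|`! %| N by apply: dvdn_mulr.
have N_large : #|{ffun Q -> Q}| <= N by apply: leq_trans (fact_geq _) (leq_pmulr _ _).
clearbody N; exists N; split=> //; split; last split.
- by move=> x; apply: (act_synt L_dfa); exact: act_wpow_idem.
- exact: condB_central HB p_N.
- exact: condB_clause3 HB p_N.
Qed.
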